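(* Let $K,L,N$ be positive integers and $t$ an integer with $L=K-t$, and consider a $(K,L,M,N)$ multi-antenna coded caching system with $\frac{M}{N}=\frac{t}{K}$. Then the delivery time $$T^*=\frac{K-t}{t+L}=\frac{L}{K}$$ is achievable by a scheme with subpacketization number $\frac{K}{\gcd(K,t,L)}$.
   Context: $(K,L,M,N)$ multi-antenna coded caching system: a server holds $N$ files $W_1,\dots,W_N$, each of size one unit, and has $L$ transmit antennas; it serves $K$ single-antenna users over a MISO broadcast channel of capacity one file per unit time. User $k$ has a cache of size $M$ units ($0\le M\le N$). In the placement phase (before demands are known) the server fills caches with uncoded file content. In the delivery phase each user $k$ requests a file $W_{d_k}$; the server sends vectors $\mathbf{x}(\tau)\in\mathbb{C}^L$ and user $k$ receives $y_k(\tau)=\mathbf{h}_k^T\mathbf{x}(\tau)+w_k(\tau)$ with $\mathbf{h}_k\in\mathbb{C}^L$ its channel vector; all nodes have perfect channel knowledge, the channel vectors are generic, and the high-SNR regime is considered (noise neglected). A scheme is correct if every user recovers its requested file from its cache and received signals, for every demand vector. The subpacketization number is the number of equal-size subfiles into which each file is split; if each file is split into $F$ subfiles and the delivery consists of $S'$ transmissions each of size $1/F$ file, the delivery time is $T=S'/F$. ''Achievable'' means such a correct scheme exists for every demand vector with that delivery time. *)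

(* Model of a (K,L,M,N) multi-antenna coded caching system
   with uncoded placement and linear delivery over a MISO broadcast channel
   (high SNR, noise neglected). *)
From HB Require Import structures.
From mathcomp Require Import all_boot all_order all_algebra.
From mathcomp Require Import mpoly.
Set Implicit Arguments.
Unset Strict Implicit.
Unset Printing Implicit Defensive.
Import Order.TTheory GRing.Theory Num.Theory.
Local Open Scope ring_scope.

(* Subfile (n, f) = the f-th of the F equal-size subfiles of file W_n. *)
Definition subfile (N F : nat) := ('I_N * 'I_F)%type.

Definition placement (K N F : nat) := 'I_K -> {set subfile N F}.

(* Cache of size M units: each subfile has size 1/F, so #|Z k| / F <= M. *)
Definition cache_ok (K N F : nat) (M : rat) (Z : placement K N F) : Prop :=
  forall k : 'I_K, (#|Z k|%:R / F%:R <= M)%R.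

(* Linear delivery with S transmissions: transmission tau sends
   x(tau) = \sum_j W_j v_{tau,j} in C^L, with precoding vectors v_{tau,j}. *)
Definition precoder (C : Type) (L N F S : nat) := 'I_S -> subfile N F -> 'rV[C]_L.

Definition tx (C : comRingType) (L N F S : nat) (V : precoder C L N F S)
  (W : subfile N F -> C) (tau : 'I_S) : 'rV[C]_L :=
  \sum_(j : subfile N F) W j *: V tau j.

Definition rx (C : comRingType) (L N F S : nat) (V : precoder C L N F S)
  (h : 'rV[C]_L) (W : subfile N F -> C) (tau : 'I_S) : C :=
  \sum_(l < L) h 0 l * tx V W tau 0 l.

(* User k (channel vector h, cache Z_k, demand n) recovers file W_n:
   the received signals together with the cache contents determine every
   subfile of W_n, for all possible file contents. *)
Definition decodes (C : comRingType) (L N F S : nat) (V : precoder C L N F S)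
  (h : 'rV[C]_L) (Zk : {set subfile N F}) (n : 'I_N) : Prop :=
  forall W W' : subfile N F -> C,
    (forall j, j \in Zk -> W j = W' j) ->
    (forall tau, rx V h W tau = rx V h W' tau) ->
    forall f : 'I_F, W (n, f) = W' (n, f).

Definition delivery_ok (C : comRingType) (K L N F S : nat)
  (Z : placement K N F) (H : 'M[C]_(K, L)) (d : 'I_K -> 'I_N)
  (V : precoder C L N F S) : Prop :=
  forall k : 'I_K, decodes V (row k H) (Z k) (d k).

(* A property holds for generic channels: it holds outside the zero set of
   some nonzero polynomial in the K*L channel coefficients. *)
Definition generic_channel (C : comRingType) (K L : nat)
  (P : 'M[C]_(K, L) -> Prop) : Prop :=
  exists p : {mpoly C[K * L]}, p != 0 /\
    forall H : 'M[C]_(K, L), p.@[fun i => mxvec H 0 i] != 0 -> P H.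

(* Achievability of delivery time S/F with subpacketization F and cache M:
   a placement (independent of demands and channels) such that, for generic
   channels and every demand vector, a correct delivery with S transmissions
   of size 1/F exists. *)
Definition achievable (C : comRingType) (K L N : nat) (M : rat) (F S : nat) : Prop :=
  exists Z : placement K N F, cache_ok M Z /\
    generic_channel (fun H : 'M[C]_(K, L) =>
      forall d : 'I_K -> 'I_N, exists V : precoder C L N F S, delivery_ok Z H d V).

From HB Require Import structures.
From mathcomp Require Import all_boot all_order all_algebra.
From mathcomp Require Import mpoly.
From mathcomp Require Import zify ring.
Set Implicit Arguments.
Unset Strict Implicit.
Unset Printing Implicit Defensive.
Import Order.TTheory GRing.Theory Num.Theory.

(* Let g = gcd(K, t, L), so that K = gF, t = ga and L = gb with F = a + b.
   Split every file into F subfiles and let user k cache subfile f of every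
   file iff (k + f) mod F < a: this stores the fraction a/F = t/K = M/N of each
   file, and every subfile is missed by exactly gb = L users.  In transmission
   tau < b every user k is sent its subfile (a + tau - k) mod F, zero-forced by
   the L antennas towards the L users missing that subfile; all other users
   cache it and cancel it.  After b transmissions each user has received all b
   subfiles it misses, so T = b/F = L/K.  Zero forcing needs F square
   submatrices of the channel to be invertible, which fails only on the zero
   set of the (nonzero) product of their determinants. *)

Lemma card_ord_count (n : nat) (Q : pred nat) :
  #|[set i : 'I_n | Q i]| = count Q (iota 0 n).
Proof.
by rewrite cardsE -sum1_card -(big_mkord Q (fun _ => 1)) sum1_count /index_iota subn0.
Qed.

Lemma count_ltn_iota (a n : nat) : a <= n -> count (fun i => i < a) (iota 0 n) = a.
Proof. by move=> le_an; rewrite -size_filter (filter_iota_ltn 0) // size_iota. Qed.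

Lemma count_rot_mod (P : pred nat) (F c : nat) : 0 < F ->
  count (fun i => P ((i + c) %% F)) (iota 0 F) = count P (iota 0 F).
Proof.
move=> F_gt0; rewrite -[LHS](count_map (fun i => (i + c) %% F)); apply/permP.
have rot_uniq : uniq [seq (i + c) %% F | i <- iota 0 F].
  rewrite map_inj_in_uniq ?iota_uniq // => x y; rewrite !mem_iota /= => xF yF.
  by move/eqP; rewrite eqn_modDr !modn_small // => /eqP.
have rot_sub : {subset [seq (i + c) %% F | i <- iota 0 F] <= iota 0 F}.
  by move=> x /mapP [i _ ->]; rewrite mem_iota ltn_pmod.
have [_ rot_eq] := uniq_min_size rot_uniq rot_sub (eq_leq (esym (size_map _ _))).
exact: uniq_perm rot_uniq (iota_uniq 0 F) rot_eq.
Qed.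

Lemma count_mod_iota (P : pred nat) (m F c : nat) : 0 < F ->
  count (fun i => P ((i + c) %% F)) (iota m F) = count P (iota 0 F).
Proof.
move=> F_gt0; rewrite -[m]addn0 iotaDl count_map -(count_rot_mod P (m + c) F_gt0).
by apply: eq_count => i /=; rewrite addnA (addnC i).
Qed.

Lemma card_ord_mod (P : pred nat) (n g F c : nat) : 0 < F -> n = g * F ->
  #|[set i : 'I_n | P ((i + c) %% F)]| = g * count P (iota 0 F).
Proof.
move=> F_gt0 ->; rewrite (card_ord_count _ (fun i => P ((i + c) %% F))).
elim: g => [|g IHg]; first by rewrite !mul0n.
by rewrite !mulSnr iotaD count_cat IHg count_mod_iota.
Qed.

Section CyclicPlacement.

Variables (K L N a b g : nat).
Hypotheses (eqK : K = g * (a + b)) (eqL : L = g * b) (b_gt0 : 0 < b).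
Variable k0 : 'I_K.

Local Notation F := (a + b).

Definition caches (k f : nat) : bool := (k + f) %% F < a.

Definition cyclic_placement : placement K N F :=
  fun k => [set s : subfile N F | caches k s.2].

Definition missing (f : nat) : {set 'I_K} := [set k : 'I_K | ~~ caches k f].

Lemma card_cyclic_placement (k : 'I_K) : #|cyclic_placement k| = N * a.
Proof.
have -> : cyclic_placement k = setX [set: 'I_N] [set f : 'I_F | caches f k].
  by apply/setP => -[n f]; rewrite !inE /caches addnC.
rewrite cardsX cardsT card_ord.
rewrite (card_ord_mod (fun f => f < a) k (ltn_addl a b_gt0) (esym (mul1n F))).
by rewrite mul1n count_ltn_iota ?leq_addr.
Qed.

Lemma card_missing (f : nat) : #|missing f| = L.
Proof.
rewrite (card_ord_mod (fun f => ~~ (f < a)) f (ltn_addl a b_gt0) eqK) eqL.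
congr (_ * _); apply/eqP; rewrite -(eqn_add2l a).
by rewrite -{1}(count_ltn_iota (leq_addr b a)) (count_predC (fun i => i < a)) size_iota.
Qed.

(* The subfile sent to user [k] in transmission [tau]: (a + tau - k) mod F, as
   k * (F - 1) = - k mod F. *)
Definition sched (k tau : nat) : 'I_F :=
  Ordinal (ltn_pmod (a + tau + k * F.-1) (ltn_addl a b_gt0)).

Lemma add_sched_mod (k tau : nat) : (k + sched k tau) %% F = (a + tau) %% F.
Proof.
rewrite /= modnDmr.
have -> : k + (a + tau + k * F.-1) = k * F + (a + tau).
  by rewrite -{2}(prednK (ltn_addl a b_gt0)) mulnS; ring.
by rewrite modnMDl.
Qed.

Lemma sched_missing (k : 'I_K) (tau : 'I_b) : k \in missing (sched k tau).
Proof.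
rewrite inE /caches add_sched_mod modn_small ?ltn_add2l // -leqNgt.
exact: leq_addr.
Qed.

Lemma sched_onto (k : nat) (f : 'I_F) : ~~ caches k f ->
  exists tau : 'I_b, sched k tau = f.
Proof.
rewrite /caches -leqNgt => a_le.
have tau_lt : (k + f) %% F - a < b by rewrite ltn_subLR // ltn_pmod // ltn_addl.
exists (Ordinal tau_lt); apply: val_inj.
have /eqP : (k + sched k (Ordinal tau_lt)) %% F = (k + f) %% F.
  by rewrite add_sched_mod /= subnKC // modn_mod.
by rewrite eqn_modDl (modn_small (ltn_ord f)) (modn_small (ltn_ord (sched _ _))) => /eqP.
Qed.

Definition missing_user (f : nat) (i : 'I_L) : 'I_K := nth k0 (enum (missing f)) i.

Lemma missing_user_inj (f : nat) : injective (missing_user f).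
Proof.
move=> i j /eqP; rewrite /missing_user nth_uniq ?enum_uniq // -?cardE ?card_missing //.
by move/eqP/val_inj.
Qed.

Lemma missing_userP (f : nat) (k : 'I_K) :
  k \in missing f -> exists i, missing_user f i = k.
Proof.
rewrite -mem_enum => k_in.
have k_lt : index k (enum (missing f)) < L by rewrite -(card_missing f) cardE index_mem.
by exists (Ordinal k_lt); rewrite /missing_user nth_index.
Qed.

End CyclicPlacement.

Local Open Scope ring_scope.

Lemma rx_sum (C : comNzRingType) (L N F S : nat) (V : precoder C L N F S)
    (h : 'rV[C]_L) (W : subfile N F -> C) (tau : 'I_S) :
  rx V h W tau = \sum_j W j * \sum_(l < L) h 0 l * V tau j 0 l.
Proof.
under eq_bigr => j _ do rewrite mulr_sumr.
rewrite exchange_big /rx; apply: eq_bigr => l _.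
by rewrite /tx summxE mulr_sumr; apply: eq_bigr => j _; rewrite mxE mulrCA.
Qed.

Definition zf_vec (C : fieldType) (K L : nat) (H : 'M[C]_(K, L))
    (s : 'I_L -> 'I_K) (j : 'I_K) : 'rV[C]_L :=
  (invmx (rowsub s H) *m \col_i (s i == j)%:R)^T.

Lemma zf_vecP (C : fieldType) (K L : nat) (H : 'M[C]_(K, L))
    (s : 'I_L -> 'I_K) (i : 'I_L) (j : 'I_K) :
  rowsub s H \in unitmx -> \sum_l H (s i) l * zf_vec H s j 0 l = (s i == j)%:R.
Proof.
move=> H_unit; have := mulKVmx H_unit (\col_i (s i == j)%:R).
move/(congr1 (fun A : 'cV[C]_L => A i 0)).
by rewrite !mxE => <-; apply: eq_bigr => l _; rewrite !mxE.
Qed.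

Definition Xrowsub (C : comNzRingType) (K L : nat) (s : 'I_L -> 'I_K) :
    'M[{mpoly C[K * L]}]_L :=
  \matrix_(i, l) 'X_(mxvec_index (s i) l).

Lemma meval_det_Xrowsub (C : comNzRingType) (K L : nat) (s : 'I_L -> 'I_K)
    (H : 'M[C]_(K, L)) :
  (\det (Xrowsub C s)).@[fun m => mxvec H 0 m] = \det (rowsub s H).
Proof.
rewrite -det_map_mx; congr (\det _); apply/matrixP => i l.
by rewrite !mxE [LHS]mevalXU mxvecE.
Qed.

Lemma det_Xrowsub_neq0 (C : comNzRingType) (K L : nat) (s : 'I_L -> 'I_K) :
  injective s -> \det (Xrowsub C s) != 0.
Proof.
move=> s_inj; apply/eqP => det0.
pose H : 'M[C]_(K, L) := \matrix_(k, l) (k == s l)%:R.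
have : rowsub s H = 1%:M by apply/matrixP => i l; rewrite !mxE (inj_eq s_inj).
move/(congr1 determinant); rewrite -meval_det_Xrowsub det0 meval0 det1.
by move/eqP; rewrite eq_sym oner_eq0.
Qed.

Section CyclicDelivery.

Variables (C : fieldType) (K L N a b g : nat).
Hypotheses (eqK : K = (g * (a + b))%N) (eqL : L = (g * b)%N) (b_gt0 : (0 < b)%N).
Variable k0 : 'I_K.

Local Notation F := (a + b)%N.
Local Notation caches := (caches a b).
Local Notation missing := (@missing K a b).
Local Notation sched := (sched a b_gt0).
Local Notation missing_user := (missing_user a b k0).
Local Notation cyclic_placement := (@cyclic_placement K N a b).

Lemma zf_missing (H : 'M[C]_(K, L)) (f : nat) (k j : 'I_K) :
  rowsub (missing_user f) H \in unitmx -> k \in missing f ->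
  \sum_l row k H 0 l * zf_vec H (missing_user f) j 0 l = (k == j)%:R.
Proof.
move=> H_unit /(missing_userP eqK eqL b_gt0 k0) [i <-]; rewrite -(zf_vecP i j H_unit).
by apply: eq_bigr => l _; rewrite mxE.
Qed.

Definition cyclic_precoder (H : 'M[C]_(K, L)) (d : 'I_K -> 'I_N) :
    precoder C L N F b :=
  fun tau s => \sum_(j | (d j, sched j tau) == s) zf_vec H (missing_user (sched j tau)) j.

Lemma rx_cyclic_precoder (H : 'M[C]_(K, L)) (d : 'I_K -> 'I_N) (h : 'rV[C]_L)
    (W : subfile N F -> C) (tau : 'I_b) :
  rx (cyclic_precoder H d) h W tau =
  \sum_j W (d j, sched j tau) *
    \sum_l h 0 l * zf_vec H (missing_user (sched j tau)) j 0 l.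
Proof.
rewrite rx_sum (partition_big (fun j => (d j, sched j tau)) xpredT) //=.
apply: eq_bigr => s _; rewrite /cyclic_precoder.
under eq_bigr => l _ do rewrite summxE mulr_sumr.
rewrite exchange_big mulr_sumr; apply: eq_bigr => j /eqP <-.
by rewrite mulr_sumr.
Qed.

Lemma cyclic_delivery_ok (H : 'M[C]_(K, L)) (d : 'I_K -> 'I_N) :
  (forall f : 'I_F, rowsub (missing_user f) H \in unitmx) ->
  delivery_ok cyclic_placement H d (cyclic_precoder H d).
Proof.
move=> H_unit k W W' eqW eq_rx f.
have [cached_f | /(sched_onto b_gt0) [tau <-]] := boolP (caches k f).
  by apply: eqW; rewrite inE.
pose gain (j : 'I_K) := \sum_l row k H 0 l * zf_vec H (missing_user (sched j tau)) j 0 l.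
have no_interference (j : 'I_K) : j != k ->
    W (d j, sched j tau) * gain j - W' (d j, sched j tau) * gain j = 0.
  move=> j_neq_k; have [k_miss | k_caches] := boolP (k \in missing (sched j tau)).
    by rewrite /gain zf_missing // eq_sym (negPf j_neq_k) !mulr0 subrr.
  by rewrite eqW ?subrr // inE; move: k_caches; rewrite inE negbK.
have /eqP := eq_rx tau; rewrite !rx_cyclic_precoder -subr_eq0 -sumrB (bigD1 k) //.
rewrite [X in _ + X == 0]big1 ?addr0; last by move=> j; exact: no_interference.
by rewrite zf_missing ?sched_missing // eqxx !mulr1 subr_eq0 => /eqP.
Qed.

End CyclicDelivery.

Lemma cyclic_achievable (C : fieldType) (K L N a b g : nat) (M : rat) :
  (0 < K)%N -> K = (g * (a + b))%N -> L = (g * b)%N -> (0 < b)%N ->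
  M = (N * a)%:R / (a + b)%:R -> achievable C K L N M (a + b) b.
Proof.
move=> K_gt0 eqK eqL b_gt0 eqM; pose k0 := Ordinal K_gt0.
exists (cyclic_placement N a b); split.
  by move=> k; rewrite card_cyclic_placement // eqM.
exists (\prod_(f < a + b) \det (Xrowsub C (missing_user a b k0 f))); split.
  by apply/prodf_neq0 => f _; apply/det_Xrowsub_neq0/(missing_user_inj eqK eqL b_gt0).
move=> H det_neq0 d; exists (cyclic_precoder b_gt0 k0 H d).
apply: (cyclic_delivery_ok eqK eqL) => f.
move: det_neq0; rewrite rmorph_prod => /prodf_neq0/(_ f isT).
by rewrite unitmxE unitfE -meval_det_Xrowsub.
Qed.

Lemma natr_divMl (R : numFieldType) (g m n : nat) : (0 < g)%N ->
  (g * m)%:R / (g * n)%:R = m%:R / n%:R :> R.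
Proof.
move=> g_gt0; have g_neq0 : g%:R != 0 :> R by rewrite pnatr_eq0 -lt0n.
by rewrite !natrM invfM mulrACA divff ?mul1r.
Qed.

Theorem theorem2 (C : numClosedFieldType) (K L N : nat) (t : int) (M : rat) :
  (0 < K)%N -> (0 < L)%N -> (0 < N)%N ->
  (L%:Z = K%:Z - t) ->
  0 <= M -> M <= N%:R ->
  M / N%:R = t%:~R / K%:R ->
  let F := (K %/ gcdn (gcdn K `|t|%N) L)%N in
  exists S : nat,
    S%:R / F%:R = (K%:~R - t%:~R) / (t%:~R + L%:R) :> rat /\
    S%:R / F%:R = L%:R / K%:R :> rat /\
    achievable C K L N M F S.
Proof.
move=> K_gt0 L_gt0 N_gt0 eqL M_ge0 _ eqM F.
have [n eq_tn] : exists n : nat, t = n%:Z.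
  exists `|t|%N; rewrite gez0_abs //.
  have : 0 <= t%:~R / K%:R :> rat by rewrite -eqM divr_ge0.
  by rewrite pmulr_lge0 ?invr_gt0 ?ltr0n // ler0z.
subst t; have eqK : K = (n + L)%N by lia.
pose g := gcdn (gcdn K n) L.
have g_gt0 : (0 < g)%N by rewrite gcdn_gt0 L_gt0 orbT.
have [dvd_n dvd_L] : (g %| n)%N /\ (g %| L)%N.
  by rewrite dvdn_gcdr (dvdn_trans (dvdn_gcdl _ _) (dvdn_gcdr _ _)).
have scale m : (g %| m)%N -> m = (g * (m %/ g))%N by move=> ?; rewrite mulnC divnK.
have eqF : F = (n %/ g + L %/ g)%N by rewrite /F /= -/g eqK divnDl.
exists (L %/ g)%N; rewrite eqF.
have ratio : (L %/ g)%:R / (n %/ g + L %/ g)%:R = L%:R / K%:R :> rat.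
  by rewrite -(natr_divMl _ _ _ g_gt0) mulnDr -!scale ?eqK.
split; [|split] => //.
  by rewrite ratio eqK -!pmulrn natrD addrAC subrr add0r.
apply: (@cyclic_achievable C K L N (n %/ g) (L %/ g) g) => //.
- by rewrite mulnDr -!scale.
- exact: scale.
- by rewrite divn_gt0 // dvdn_leq.
rewrite -(natr_divMl _ _ _ g_gt0) mulnCA -scale // mulnDr -!scale // -eqK.
move: eqM; rewrite natrM -mulrA -pmulrn => <-.
by rewrite mulrC divfK // pnatr_eq0 -lt0n.
Qed.
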